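(* Let $\mathbb{K}$ be an algebraically closed field of characteristic zero and let $D=\partial_x+(ay+b)\partial_y$ be a derivation of $\mathbb{K}[x,y]$ with $a,b\in\mathbb{K}[x]$ and $a\neq 0$. Then $D$ is simple if and only if $\mathrm{Aut}(D)=\{\mathrm{id}\}$.
   Context: A derivation of $\mathbb{K}[x,y]$ is a $\mathbb{K}$-linear map $D$ with $D(fg)=gD(f)+fD(g)$. $D$ is simple if there is no ideal $I$ with $(0)\neq I\neq \mathbb{K}[x,y]$ and $D(I)\subseteq I$. $\mathrm{Aut}(D)$ denotes the group of $\mathbb{K}$-algebra automorphisms $\rho$ of $\mathbb{K}[x,y]$ with $\rho D=D\rho$. *)

From HB Require Import structures.
From mathcomp Require Import all_boot all_order all_algebra.
Set Implicit Arguments. Unset Strict Implicit. Unset Printing Implicit Defensive.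
Import GRing.Theory.
Local Open Scope ring_scope.

(* K[x,y] is represented as {poly {poly K}}: polynomials in y whose
   coefficients are polynomials in x. *)
Notation Kxy K := {poly {poly K}}.

Definition dx (K : fieldType) (f : Kxy K) : Kxy K := map_poly (@deriv _) f.
Definition dy (K : fieldType) (f : Kxy K) : Kxy K := deriv f.

Definition Dab (K : fieldType) (a b : {poly K}) (f : Kxy K) : Kxy K :=
  dx f + (a%:P * 'X + b%:P) * dy f.

Definition is_ideal (R : comRingType) (I : R -> Prop) : Prop :=
  I 0 /\ (forall u v, I u -> I v -> I (u + v)) /\ (forall r u, I u -> I (r * u)).

Definition simple_derivation (R : comRingType) (D : R -> R) : Prop :=
  ~ exists I : R -> Prop,
      [/\ is_ideal I, (exists u, I u /\ u <> 0), ~ I 1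
        & forall u, I u -> I (D u)].

Definition is_Kalg_aut (K : fieldType) (rho : Kxy K -> Kxy K) : Prop :=
  [/\ forall f g, rho (f + g) = rho f + rho g,
      forall f g, rho (f * g) = rho f * rho g,
      rho 1 = 1,
      forall (c : K) f, rho (c%:P%:P * f) = c%:P%:P * rho f
    & bijective rho].

Definition in_Aut (K : fieldType) (D : Kxy K -> Kxy K) (rho : Kxy K -> Kxy K) : Prop :=
  is_Kalg_aut rho /\ forall f, rho (D f) = D (rho f).

Definition Aut_trivial (K : fieldType) (D : Kxy K -> Kxy K) : Prop :=
  forall rho, in_Aut D rho -> forall f, rho f = f.

(* If D is not simple, take a nonzero element f of a proper D-stable ideal of
   minimal y-degree d and, among those, with leading y-coefficient of minimal
   x-degree.  Then D f - d a f stays in the ideal, which forces that leading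
   coefficient to be a constant, then D f = d a f, and the y^(d-1)-coefficient
   of this equation gives h in K[x] with h' = a h - b (Shamsuddin).  For such h,
   y |-> 2 y + h extends to a nontrivial automorphism commuting with D.
   Conversely, if D is simple then ker D = K, and no h with h' = a h - b exists,
   since y + h would generate a D-stable ideal.  For rho in Aut(D), rho x - x
   lies in ker D, so rho x = x + c; comparing top y-coefficients in
   D (rho y) = a(x + c) rho y + b(x + c) gives deg_y (rho y) = 1 and
   a(x + c) = a, hence c = 0, and the nonexistence of h forces rho y = y. *)

From HB Require Import structures.
From mathcomp Require Import all_boot all_order all_algebra ring.
From Stdlib Require Import Classical.
Set Implicit Arguments. Unset Strict Implicit. Unset Printing Implicit Defensive.
Import GRing.Theory.
Local Open Scope ring_scope.

Section PolyChar0.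
Variables (K : fieldType) (hchar : [pchar K] =i pred0).

Lemma pchar0_natr_eq0 n : (n%:R == 0 :> K) = (n == 0)%N.
Proof. by move: n; apply/pcharf0P. Qed.

Lemma deriv_eq0_polyC (p : {poly K}) : p^`() = 0 -> p = (p`_0)%:P.
Proof.
move=> dp0; apply: size1_polyC; apply/leq_sizeP => -[//|j] _.
have /eqP := congr1 (fun q : {poly K} => q`_j) dp0.
by rewrite coef_deriv coef0 -mulr_natr mulf_eq0 pchar0_natr_eq0 orbF => /eqP.
Qed.

Lemma pchar0_natrI : injective (fun n : nat => n%:R : K).
Proof.
move=> k j /= kj; wlog le_kj : k j kj / (k <= j)%N.
  by move=> H; case/orP: (leq_total k j) => /H; [apply|move/(_ (esym kj))].
by apply/eqP; rewrite eqn_leq le_kj -subn_eq0 -pchar0_natr_eq0 natrB // kj subrr eqxx.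
Qed.

Lemma comp_XaddC_fixed_eq0 (p : {poly K}) (c : K) :
  (1 < size p)%N -> p \Po ('X + c%:P) = p -> c = 0.
Proof.
move=> p_gt1 pc_eq; have [//|c_neq0] := eqVneq c 0; exfalso.
pose p0 := p - (p.[0])%:P.
have p0_neq0 : p0 != 0.
  rewrite /p0 subr_eq0; apply: contraTneq _ p_gt1 => ->.
  by rewrite size_polyC -leqNgt leq_b1.
have p0_root k : root p0 (k%:R * c).
  apply/rootP/eqP; rewrite /p0 hornerD hornerN hornerC subr_eq0; apply/eqP.
  elim: k => [|k IHk]; first by rewrite mul0r.
  rewrite -IHk -{2}pc_eq horner_comp hornerD hornerX hornerC.
  by rewrite -[k.+1]addn1 natrD mulrDl mul1r.
have natr_c_inj : injective (fun k : nat => k%:R * c).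
  by move=> k j /= /(mulIf c_neq0) /pchar0_natrI.
suff: (size p0 < size p0)%N by rewrite ltnn.
rewrite -[X in (X < _)%N](size_iota 0) -(size_map (fun k : nat => k%:R * c)).
apply: max_poly_roots p0_neq0 _ _; last by rewrite map_inj_uniq ?iota_uniq.
by apply/allP => _ /mapP [k _ ->].
Qed.

End PolyChar0.

Lemma deriv_eq_mul_eq0 (R : idomainType) (p c : {poly R}) :
  p != 0 -> p^`() = c * p -> c = 0.
Proof.
move=> p_neq0 dp; apply/eqP; apply: contraTT (lt_size_deriv p_neq0) => c_neq0.
rewrite dp size_mul // -leqNgt.
by move: c_neq0; rewrite -size_poly_gt0; case: (size c) => // k _; rewrite addSn leq_addl.
Qed.

Lemma sol_scale (K : fieldType) (a b g : {poly K}) (c : K) :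
  c != 0 -> g^`() = a * g - c *: b -> exists h : {poly K}, h^`() = a * h - b.
Proof.
move=> c_neq0 dg; exists (c^-1 *: g).
by rewrite derivZ dg scalerBr scalerAr scalerA mulVf ?scale1r.
Qed.

Lemma sol_polyC (K : fieldType) (b : {poly K}) (al : K) :
  al != 0 -> exists h : {poly K}, h^`() = al%:P * h - b.
Proof.
move=> al_neq0; set n := size b.
exists (\sum_(k < n.+1) al^-k.+1 *: b^`(k)).
have dbn : b^`(n.+1) = 0 by apply: derivn_poly0; rewrite leqnSn.
rewrite raddf_sum /= big_ord_recr /= derivZ -derivnS dbn scaler0 addr0.
rewrite mulr_sumr big_ord_recl /= mul_polyC scalerA expr1 divff // scale1r.
rewrite addrC addKr; apply: eq_bigr => i _.
rewrite derivZ mul_polyC scalerA /bump /= add1n add0n; congr (_ *: _).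
by rewrite [in RHS]exprS invfM mulVKf.
Qed.

Section DabCalculus.
Variables (K : fieldType) (a b : {poly K}).
Local Notation D := (Dab a b).

Lemma coef_Dab (f : Kxy K) k :
  (D f)`_k = (f`_k)^`() + k%:R * a * f`_k + k.+1%:R * b * f`_k.+1.
Proof.
rewrite /Dab /dx /dy coefD coef_map mulrDl coefD -addrA; congr (_ + _).
rewrite -mulrA coefCM coefXM coefCM !coef_deriv; congr (_ + _).
  by case: k => [|k] /=; rewrite ?(mul0r, mulr0) // mulrnAr mulr_natl mulrnAl.
by rewrite mulrnAr mulr_natl mulrnAl.
Qed.

Lemma Dab_is_zmod_morphism : zmod_morphism D.
Proof. by move=> f g; rewrite /Dab /dx /dy !raddfB /= mulrBr opprD addrACA. Qed.

Lemma DabM (f g : Kxy K) : D (f * g) = D f * g + f * D g.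
Proof.
have dxM : dx (f * g) = dx f * g + f * dx g.
  apply/polyP => i; rewrite /dx coefD !coef_map !coefM /= raddf_sum -big_split.
  by apply: eq_bigr => j _; rewrite /= derivM !coef_map.
rewrite /Dab dxM /dy derivM.
move: (a%:P * 'X + b%:P) (dx f) (dx g) f^`() g^`() => w u v p q.
by rewrite mulrDr mulrDl mulrDr !mulrA [f * w]mulrC addrACA.
Qed.

Lemma Dab_polyC (p : {poly K}) : D p%:P = (p^`())%:P.
Proof. by rewrite /Dab /dx /dy map_polyC derivC mulr0 addr0. Qed.

Lemma Dab_X : D 'X = a%:P * 'X + b%:P.
Proof.
rewrite /Dab; have -> : dx ('X : Kxy K) = 0.
  apply/polyP => i; rewrite /dx coef_map coefX coef0 /=.
  by case: (i == 1)%N; rewrite ?deriv0 // -polyC1 derivC.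
by rewrite /dy derivX mulr1 add0r.
Qed.

End DabCalculus.

HB.instance Definition _ (K : fieldType) (a b : {poly K}) :=
  GRing.isZmodMorphism.Build _ _ (Dab a b) (@Dab_is_zmod_morphism K a b).

Lemma Kxy_ind (K : fieldType) (P : Kxy K -> Prop) :
  (forall c : K, P c%:P%:P) -> P 'X%:P -> P 'X ->
  (forall f g, P f -> P g -> P (f + g)) ->
  (forall f g, P f -> P g -> P (f * g)) -> forall f, P f.
Proof.
move=> PC Px Py PD PM.
have PpolyC (p : {poly K}) : P p%:P.
  elim/poly_ind: p => [|p c IHp]; first by rewrite -polyC0; apply: PC.
  by rewrite polyCD polyCM; apply: PD; [apply: PM | apply: PC].
elim/poly_ind => [|f p IHf]; first exact: PpolyC.
by apply: PD; [apply: PM | apply: PpolyC].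
Qed.

Lemma eq_twisted_derivation (K : fieldType) (rho E1 E2 : Kxy K -> Kxy K) :
  (forall f g, E1 (f + g) = E1 f + E1 g) ->
  (forall f g, E2 (f + g) = E2 f + E2 g) ->
  (forall f g, E1 (f * g) = E1 f * rho g + rho f * E1 g) ->
  (forall f g, E2 (f * g) = E2 f * rho g + rho f * E2 g) ->
  (forall c : K, E1 c%:P%:P = E2 c%:P%:P) ->
  E1 'X%:P = E2 'X%:P -> E1 'X = E2 'X -> forall f, E1 f = E2 f.
Proof.
move=> E1D E2D E1M E2M E12C E12x E12y; apply: Kxy_ind => // f g E12f E12g.
  by rewrite E1D E2D E12f E12g.
by rewrite E1M E2M E12f E12g.
Qed.

Lemma Kxy_unit_polyC (K : fieldType) (w : Kxy K) :
  w \is a GRing.unit -> w = ((w`_0)`_0)%:P%:P.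
Proof.
rewrite poly_unitE => /andP [/eqP w_size1]; rewrite poly_unitE => /andP [/eqP w0_size1 _].
rewrite [LHS]size1_polyC ?w_size1 //; congr _%:P.
by rewrite [LHS]size1_polyC ?w0_size1.
Qed.

Lemma principal_Dstable_not_simple (R : comUnitRingType) (D : R -> R) (w t : R) :
  (forall f g, D (f * g) = D f * g + f * D g) ->
  w != 0 -> w \isn't a GRing.unit -> D w = t * w -> ~ simple_derivation D.
Proof.
move=> DM w_neq0 w_nunit Dw; apply; exists (fun u => exists r, u = r * w); split.
- split; first by exists 0; rewrite mul0r.
  split; first by move=> _ _ [r ->] [s ->]; exists (r + s); rewrite mulrDl.
  by move=> r _ [s ->]; exists (r * s); rewrite mulrA.
- by exists w; split; [exists 1; rewrite mul1r | apply/eqP].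
- move=> [r w_inv]; move/negP: w_nunit; apply.
  by apply/unitrPr; exists r; rewrite mulrC -w_inv.
- by move=> _ [r ->]; exists (D r + r * t); rewrite DM Dw mulrA -mulrDl.
Qed.

Section DabSimple.
Variables (K : fieldType) (a b : {poly K}).
Local Notation D := (Dab a b).

Lemma simple_Dab_ker_const (u : Kxy K) :
  simple_derivation D -> D u = 0 -> u = ((u`_0)`_0)%:P%:P.
Proof.
move=> Dsimple Du0; have [//|u_nconst] := eqVneq u ((u`_0)`_0)%:P%:P; exfalso.
apply: (principal_Dstable_not_simple (w := u) (t := 0) (@DabM _ a b) _ _ _ Dsimple).
- by apply: contraNneq u_nconst => ->; rewrite !coef0.
- by apply: contraNN u_nconst => /Kxy_unit_polyC/eqP.
- by rewrite mul0r.
Qed.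

Lemma sol_not_simple (h : {poly K}) :
  h^`() = a * h - b -> ~ simple_derivation D.
Proof.
move=> dh; have XaddC_neq0 : 'X + h%:P != 0 by rewrite -size_poly_eq0 size_XaddC.
apply: (principal_Dstable_not_simple (t := a%:P) (@DabM _ a b) XaddC_neq0).
  apply/negP => /Kxy_unit_polyC XaddC_const.
  by have := size_XaddC h; rewrite {1}XaddC_const size_polyC; case: eqP.
rewrite (raddfD (Dab a b)) /= Dab_X Dab_polyC dh polyCB polyCM.
ring.
Qed.

Lemma simple_size_gt1 : a != 0 -> simple_derivation D -> (1 < size a)%N.
Proof.
move=> a_neq0 Dsimple; rewrite ltnNge; apply/negP => /size1_polyC a_const.
have a0_neq0 : a`_0 != 0 by rewrite -polyC_eq0 -a_const.
have [h dh] := sol_polyC b a0_neq0.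
by apply: (sol_not_simple (h := h)) Dsimple; rewrite a_const.
Qed.

End DabSimple.

Lemma Dab_sub_top (K : fieldType) (a b : {poly K}) (f : Kxy K) d :
  (size f <= d.+1)%N ->
  (size (Dab a b f - (d%:R * a)%:P * f)%R <= d.+1)%N /\
  (Dab a b f - (d%:R * a)%:P * f)`_d = (f`_d)^`().
Proof.
move=> /leq_sizeP f_size; split; last first.
  by rewrite coefB coef_Dab coefCM (f_size d.+1) // mulr0 addr0 addrK.
apply/leq_sizeP => j d_lt_j.
rewrite coefB coef_Dab coefCM (f_size j) // (f_size j.+1) ?leqW //.
by rewrite deriv0 !mulr0 !addr0 subr0.
Qed.

Section Shamsuddin.
Variables (K : fieldType) (a b : {poly K}).
Hypothesis hchar : [pchar K] =i pred0.
Variable I : Kxy K -> Prop.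
Hypotheses (I_ideal : is_ideal I) (I_proper : ~ I 1)
  (I_Dstable : forall u, I u -> I (Dab a b u)).
Local Notation D := (Dab a b).
Local Notation sol := (exists h : {poly K}, h^`() = a * h - b).

Let I_mul r u : I u -> I (r * u).
Proof. by case: I_ideal => _ [_ IM]; apply: IM. Qed.

Let I_Dab_sub d f : I f -> I (D f - (d%:R * a)%:P * f).
Proof.
case: I_ideal => _ [ID _] If; apply: ID; first exact: I_Dstable.
by rewrite -mulNr; apply: I_mul.
Qed.

Lemma sol_of_monic_top d f :
  (forall g, I g -> g != 0 -> (size g <= d)%N -> sol) ->
  I f -> (size f <= d.+1)%N -> f`_d = 1 -> sol.
Proof.
move=> IHd If f_size fd1; have [F_size Fd] := Dab_sub_top a b f_size.
have [F0 | F_neq0] := eqVneq (D f - (d%:R * a)%:P * f) 0; last first.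
  apply: (IHd _ _ F_neq0); first exact: I_Dab_sub.
  apply/leq_sizeP => j; rewrite leq_eqVlt => /orP [/eqP <- | d_lt_j].
    by rewrite Fd fd1 -polyC1 derivC.
  exact: (leq_sizeP _ _ F_size).
case: d IHd f_size fd1 Fd F_size F0 => [|e] _ f_size fd1 _ _ F0.
  by case: I_proper; rewrite [f]size1_polyC // fd1 in If.
have /eqP := congr1 (fun q : Kxy K => q`_e) F0.
rewrite coefB coef_Dab coefCM fd1 mulr1 coef0 subr_eq0 => /eqP dfe.
apply: (@sol_scale _ a b (f`_e) e.+1%:R); first by rewrite pchar0_natr_eq0.
rewrite scaler_nat -mulr_natl; apply: (addIr (e%:R * a * f`_e + e.+1%:R * b)).
by rewrite addrA dfe -[e.+1]addn1 natrD; ring.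
Qed.

Lemma sol_of_top d f :
  (forall g, I g -> g != 0 -> (size g <= d)%N -> sol) ->
  I f -> size f = d.+1 -> sol.
Proof.
move=> IHd; have [m] := ubnP (size f`_d); elim: m f => // m IHm f fd_lt If f_size.
have fd_neq0 : f`_d != 0.
  by rewrite -[d]/(d.+1.-1) -f_size -lead_coefE lead_coef_eq0 -size_poly_eq0 f_size.
have [dfd0 | dfd_neq0] := eqVneq (f`_d)^`() 0.
  have fd_const := deriv_eq0_polyC hchar dfd0.
  have c_neq0 : (f`_d)`_0 != 0 by rewrite -polyC_eq0 -fd_const.
  apply: (sol_of_monic_top IHd (f := ((f`_d)`_0)^-1%:P%:P * f)); first exact: I_mul.
    rewrite (leq_trans (size_polyMleq _ _)) // size_polyC polyC_eq0 invr_eq0 c_neq0.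
    by rewrite f_size.
  by rewrite coefCM {2}fd_const -polyCM mulVf.
have [F_size Fd] := Dab_sub_top a b (eq_leq f_size).
apply: (IHm _ _ (I_Dab_sub d If)).
  by rewrite Fd (leq_trans (lt_size_deriv fd_neq0)).
apply/eqP; rewrite eqn_leq F_size ltnNge; apply: contra dfd_neq0.
by move=> /leq_sizeP F_small; rewrite -Fd F_small.
Qed.

Lemma Dstable_ideal_sol f : I f -> f != 0 -> sol.
Proof.
have [n] := ubnP (size f); elim: n f => // n IHn f f_lt If f_neq0.
move: f_lt; rewrite ltnS leq_eqVlt => /orP [/eqP f_size | f_lt]; last first.
  exact: IHn f f_lt If f_neq0.
case: n IHn f_size => [|d] IHn f_size.
  by move: f_neq0; rewrite -size_poly_eq0 f_size.
apply: (sol_of_top _ If f_size) => g Ig g_neq0 g_size.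
exact: IHn g g_size Ig g_neq0.
Qed.

End Shamsuddin.

Lemma not_simple_sol (K : fieldType) (hchar : [pchar K] =i pred0) (a b : {poly K}) :
  ~ simple_derivation (Dab a b) -> exists h : {poly K}, h^`() = a * h - b.
Proof.
move=> /NNPP [I [I_ideal [u [Iu u_neq0]] I_proper I_Dstable]].
exact: (@Dstable_ideal_sol K a b hchar I I_ideal I_proper I_Dstable u Iu
  (introN eqP u_neq0)).
Qed.

Lemma Kalg_aut_polyC (K : fieldType) (rho : Kxy K -> Kxy K) (c : K) :
  is_Kalg_aut rho -> rho c%:P%:P = c%:P%:P.
Proof. by case=> _ _ rho1 rhoC _; rewrite -[c%:P%:P]mulr1 rhoC rho1. Qed.

Lemma Kalg_aut_polyC_comp (K : fieldType) (rho : Kxy K -> Kxy K) (s : {poly K}) :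
  is_Kalg_aut rho -> rho 'X%:P = s%:P -> forall p : {poly K}, rho p%:P = (p \Po s)%:P.
Proof.
move=> rho_aut rho_x; have [rhoD rhoM _ _ _] := rho_aut.
elim/poly_ind => [|p c IHp].
  by have := Kalg_aut_polyC 0 rho_aut; rewrite comp_poly0 !polyC0 => ->.
rewrite polyCD polyCM rhoD rhoM IHp rho_x Kalg_aut_polyC //.
by rewrite comp_poly_MXaddC polyCD polyCM.
Qed.

Lemma Kalg_aut_size_y (K : fieldType) (rho : Kxy K -> Kxy K) (s : {poly K}) :
  is_Kalg_aut rho -> rho 'X%:P = s%:P -> (1 < size (rho 'X))%N.
Proof.
move=> rho_aut rho_x; have [rhoD rhoM _ _ [sigma _ rho_sigma]] := rho_aut.
rewrite ltnNge; apply/negP => rho_y_small.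
suff /(_ (sigma 'X)) : forall f, (size (rho f) <= 1)%N by rewrite rho_sigma size_polyX.
apply: Kxy_ind => [c | | // | f g | f g].
- by rewrite Kalg_aut_polyC // size_polyC leq_b1.
- by rewrite rho_x size_polyC leq_b1.
- rewrite rhoD => f_small g_small.
  by rewrite (leq_trans (size_polyD _ _)) // geq_max f_small.
- rewrite rhoM => /size1_polyC -> /size1_polyC ->.
  by rewrite -polyCM size_polyC leq_b1.
Qed.

Lemma Dab_comp (K : fieldType) (a b : {poly K}) (q : Kxy K) :
  Dab a b q = a%:P * q + b%:P -> forall f, Dab a b (f \Po q) = Dab a b f \Po q.
Proof.
move=> Dq; apply: (@eq_twisted_derivation _ (fun f => f \Po q)).
- by move=> f g; rewrite comp_polyD (raddfD (Dab a b)).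
- by move=> f g; rewrite (raddfD (Dab a b)) comp_polyD.
- by move=> f g; rewrite comp_polyM DabM.
- by move=> f g; rewrite DabM comp_polyD !comp_polyM.
- by move=> c; rewrite comp_polyC !Dab_polyC derivC comp_polyC.
- by rewrite comp_polyC !Dab_polyC derivX comp_polyC.
- by rewrite comp_polyX Dab_X comp_polyD comp_polyM comp_polyX !comp_polyC.
Qed.

Lemma comp_affine_Kalg_aut (K : fieldType) (u : K) (v : {poly K}) :
  u != 0 -> is_Kalg_aut (fun f : Kxy K => f \Po (u%:P%:P * 'X + v%:P)).
Proof.
move=> u_neq0; split.
- by move=> f g; rewrite comp_polyD.
- by move=> f g; rewrite comp_polyM.
- by rewrite comp_polyC.
- by move=> c f; rewrite comp_polyM comp_polyC.
exists (fun f => f \Po (u^-1%:P%:P * ('X - v%:P))) => f; rewrite -comp_polyA.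
  rewrite comp_polyD comp_polyM comp_polyX !comp_polyC mulrA -!polyCM divff //.
  by rewrite mul1r subrK comp_polyXr.
rewrite comp_polyM comp_polyB comp_polyX !comp_polyC addrK mulrA -!polyCM mulVf //.
by rewrite mul1r comp_polyXr.
Qed.

Section SolutionAut.
Variables (K : fieldType) (a b h : {poly K}) (u : K).
Hypotheses (dh : h^`() = a * h - b) (u_neq0 : u != 0).

(* D (u y + (u - 1) h) = a (u y + (u - 1) h) + b precisely because h' = a h - b. *)
Local Notation twist := (fun f : Kxy K => f \Po (u%:P%:P * 'X + ((u - 1) *: h)%:P)).

Lemma twist_in_Aut : in_Aut (Dab a b) twist.
Proof.
split; first exact: comp_affine_Kalg_aut.
move=> f; rewrite Dab_comp // (raddfD (Dab a b)) /= DabM !Dab_polyC derivC mul0r add0r.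
rewrite Dab_X derivZ dh -!mul_polyC !(polyCM, polyCB, polyCD, polyC1).
ring.
Qed.

Lemma sol_Aut_nontrivial : u != 1 -> ~ Aut_trivial (Dab a b).
Proof.
move=> u_neq1 /(_ _ twist_in_Aut 'X) /(congr1 (fun p : Kxy K => p`_1)).
rewrite comp_polyX coefD coefCM coefX coefC /= mulr1 addr0 -polyC1.
by move/polyC_inj/eqP; rewrite (negbTE u_neq1).
Qed.

End SolutionAut.

Section SimpleAut.
Variables (K : fieldType) (hchar : [pchar K] =i pred0) (a b : {poly K}).
Hypothesis a_neq0 : a != 0.
Local Notation D := (Dab a b).

Lemma Dab_affine_eigen (A B : {poly K}) (g : Kxy K) :
  lead_coef A = lead_coef a -> D g = A%:P * g + B%:P -> (1 < size g)%N ->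
  size g = 2 /\ A = a.
Proof.
move=> lcA Dg; case g_size: (size g) => [|[|m]] // _.
have g_top0 : g`_m.+2 = 0 by apply: (leq_sizeP _ _ (eq_leq g_size)).
have g_top_neq0 : g`_m.+1 != 0.
  by rewrite -[m.+1]/(m.+2.-1) -g_size -lead_coefE lead_coef_eq0 -size_poly_eq0 g_size.
have A_eq : A = m.+1%:R * a.
  apply/eqP; rewrite -subr_eq0; apply/eqP/(deriv_eq_mul_eq0 g_top_neq0).
  have := congr1 (fun q : Kxy K => q`_m.+1) Dg.
  by rewrite coef_Dab coefD coefCM coefC g_top0 mulr0 !addr0 mulrBl => <-; rewrite addrK.
suff m0 : m = 0%N by rewrite A_eq m0 mulr1n mul1r.
move: lcA; rewrite A_eq lead_coefM -polyC_natr lead_coefC => /eqP.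
rewrite -subr_eq0 -{2}(mul1r (lead_coef a)) -mulrBl mulf_eq0 lead_coef_eq0 (negbTE a_neq0).
by rewrite orbF mulrSr addrK pchar0_natr_eq0 // => /eqP.
Qed.

Lemma Dab_fix_y (g : Kxy K) :
  simple_derivation D -> size g = 2 -> D g = a%:P * g + b%:P -> g = 'X.
Proof.
move=> Dsimple g_size Dg; have Dg_coef k := congr1 (fun q : Kxy K => q`_k) Dg.
have g2 : g`_2 = 0 by apply: (leq_sizeP _ _ (eq_leq g_size)).
have /(deriv_eq0_polyC hchar) g1_const : (g`_1)^`() = 0.
  move: (Dg_coef 1%N); rewrite /= coef_Dab coefD coefCM coefC g2 mulr0 !addr0.
  by rewrite mulr1n mul1r => /eqP; rewrite -subr_eq0 addrK => /eqP.
move: (g`_1)`_0 g1_const => l g1_const.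
have Dg0 : (g`_0)^`() = a * g`_0 - (l - 1) *: b.
  move: (Dg_coef 0%N); rewrite /= coef_Dab coefD coefCM coefC mulr0n !mul0r addr0.
  rewrite mulr1n mul1r /= g1_const => Dg0; rewrite -(addrK (b * l%:P) (g`_0)^`()) Dg0.
  by rewrite [b * _]mulrC mul_polyC scalerBl scale1r opprB addrA.
have l1 : l = 1.
  apply/eqP; rewrite -subr_eq0; apply: contraPT _ Dsimple => l_neq1.
  by have [h dh] := sol_scale l_neq1 Dg0; apply: sol_not_simple dh.
have g0 : g`_0 = 0.
  rewrite l1 subrr scale0r subr0 in Dg0; apply/eqP; apply: contraTT _ a_neq0 => g0_neq0.
  by rewrite (deriv_eq_mul_eq0 g0_neq0 Dg0) eqxx.
apply/polyP => -[|[|i]]; rewrite coefX //= ?g1_const ?l1 //.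
by apply: (leq_sizeP _ _ (eq_leq g_size)).
Qed.

Lemma simple_Aut_x_shift (rho : Kxy K -> Kxy K) :
  simple_derivation D -> in_Aut D rho -> exists gam : K, rho 'X%:P = ('X + gam%:P)%:P.
Proof.
move=> Dsimple [[_ _ rho1 _ _] rho_comm].
have /(simple_Dab_ker_const Dsimple) rho_x_sub : D (rho 'X%:P - 'X%:P) = 0.
  by rewrite (raddfB (Dab a b)) /= -rho_comm !Dab_polyC derivX polyC1 rho1 subrr.
by exists ((rho 'X%:P - 'X%:P)`_0`_0); rewrite polyCD -rho_x_sub addrC subrK.
Qed.

Lemma simple_Aut_trivial : simple_derivation D -> Aut_trivial D.
Proof.
move=> Dsimple rho rho_in; have [rho_aut rho_comm] := rho_in.
have [rhoD rhoM _ _ _] := rho_aut.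
have [gam rho_x] := simple_Aut_x_shift Dsimple rho_in.
have rho_polyC := Kalg_aut_polyC_comp rho_aut rho_x.
have Drho_y :
    D (rho 'X) = (a \Po ('X + gam%:P))%:P * rho 'X + (b \Po ('X + gam%:P))%:P.
  by rewrite -rho_comm Dab_X rhoD rhoM !rho_polyC.
have lc_shift : lead_coef (a \Po ('X + gam%:P)) = lead_coef a.
  by rewrite lead_coef_comp ?size_XaddC // lead_coefXaddC expr1n mulr1.
have [y_size a_shift] := Dab_affine_eigen lc_shift Drho_y (Kalg_aut_size_y rho_aut rho_x).
have gam0 := comp_XaddC_fixed_eq0 hchar (simple_size_gt1 a_neq0 Dsimple) a_shift.
rewrite gam0 addr0 !comp_polyXr in rho_x Drho_y.
have rho_y := Dab_fix_y Dsimple y_size Drho_y.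
apply: Kxy_ind => [c | // | // | f g rho_f rho_g | f g rho_f rho_g].
- exact: Kalg_aut_polyC.
- by rewrite rhoD rho_f rho_g.
- by rewrite rhoM rho_f rho_g.
Qed.

End SimpleAut.

Theorem theorem1p2 (K : closedFieldType) (hchar : [pchar K] =i pred0)
    (a b : {poly K}) (ha : a != 0) :
  simple_derivation (Dab a b) <-> Aut_trivial (Dab a b).
Proof.
split; first exact: simple_Aut_trivial.
move=> Aut_triv; apply: NNPP => not_simple.
have [h dh] := not_simple_sol hchar not_simple.
have two_neq0 : (2%:R : K) != 0 by rewrite pchar0_natr_eq0.
have two_neq1 : (2%:R : K) != 1%:R by apply/eqP => /(pchar0_natrI hchar).
exact: sol_Aut_nontrivial dh two_neq0 two_neq1 Aut_triv.
Qed.
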